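(* Let $d_2>0$, $y_\star>0$, $K_P\ge 0$, $K_I>0$ and $u_0\in\mathbb{R}$. Consider the system on $\mathbb{R}^3$ with state $\chi=(\chi_1,\chi_2,\chi_3)=(x_1,x_2,x_c)$ given by $$\dot x_1 = 1 - x_2 u,\qquad \dot x_2 = -d_2 x_2 + x_1 u,\qquad \dot x_c = y_\star - x_2,\qquad u = u_0 + K_I x_c + K_P (y_\star - x_2),$$ i.e. $$\dot\chi=\begin{pmatrix}1-u_0\chi_2-K_I\chi_2\chi_3-K_P\chi_2 y_\star+K_P\chi_2^2\\ -d_2\chi_2+u_0\chi_1+K_I\chi_1\chi_3+K_P\chi_1 y_\star-K_P\chi_1\chi_2\\ -\chi_2+y_\star\end{pmatrix}.$$ Then this closed-loop system has a unique equilibrium point, and this equilibrium is unstable (in the sense of Lyapunov) for all values of $d_2>0$, $y_\star>0$, $K_P\ge 0$, $K_I>0$, $u_0\in\mathbb{R}$.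
   Context: This is the (time- and state-scaled) averaged model of a DC-DC Boost converter with no inductor resistance: $x_1$ is the scaled inductor current, $x_2$ the scaled capacitor (output) voltage, $u$ the duty cycle, $d_2>0$ the scaled load conductance, and the scaled source voltage is $1$. The controller is a PI controller acting on the voltage error $y_\star-x_2$, where $y_\star>0$ is the desired output voltage, $x_c$ is the integrator state, $K_P,K_I$ are the PI gains and $u_0$ is a designer-chosen constant. *)

From Stdlib Require Import Reals.
From Coquelicot Require Import Coquelicot.
Open Scope R_scope.

(* State chi = (x1, x2, xc) as a triple ((x1, x2), xc). *)
Definition st1 (c : R * R * R) : R := fst (fst c).
Definition st2 (c : R * R * R) : R := snd (fst c).
Definition st3 (c : R * R * R) : R := snd c.

Definition boost_PI (d2 ystar KP KI u0 : R) (c : R * R * R) : R * R * R :=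
  let x1 := st1 c in let x2 := st2 c in let xc := st3 c in
  let u := u0 + KI * xc + KP * (ystar - x2) in
  ((1 - x2 * u, - d2 * x2 + x1 * u), ystar - x2).

Definition dist3 (a b : R * R * R) : R :=
  sqrt ((st1 a - st1 b) ^ 2 + (st2 a - st2 b) ^ 2 + (st3 a - st3 b) ^ 2).

Definition is_solution (F : R * R * R -> R * R * R) (T : R) (x : R -> R * R * R) : Prop :=
  forall t, 0 <= t <= T ->
    is_derive (fun s => st1 (x s)) t (st1 (F (x t))) /\
    is_derive (fun s => st2 (x s)) t (st2 (F (x t))) /\
    is_derive (fun s => st3 (x s)) t (st3 (F (x t))).

Definition is_equilibrium (F : R * R * R -> R * R * R) (e : R * R * R) : Prop :=
  F e = ((0, 0), 0).

(* Lyapunov stability of e (forward in time): every solution starting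
   delta-close to e stays eps-close to e as long as it exists. *)
Definition lyapunov_stable (F : R * R * R -> R * R * R) (e : R * R * R) : Prop :=
  forall eps, 0 < eps -> exists delta, 0 < delta /\
    forall (T : R) (x : R -> R * R * R), 0 <= T -> is_solution F T x ->
      dist3 (x 0) e < delta -> forall t, 0 <= t <= T -> dist3 (x t) e < eps.

From Stdlib Require Import Reals Lra Lia Arith Factorial Classical.
From Coquelicot Require Import Coquelicot.
Open Scope R_scope.

(* The equilibrium is ((d2 ystar^2, ystar), (1/ystar - u0)/KI).  The characteristic
   polynomial s^3 + a2 s^2 + a1 s - KI of the linearisation there has negative constant
   term, hence a root lam > 0.  In linear coordinates (xi, eta, zeta) adapted to lam, xi
   grows like exp(lam t) up to quadratic terms, while zeta^2 + b0 eta^2 does not grow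
   under the linear flow on the complementary invariant plane.  Hence
   V = xi - beta (zeta^2 + b0 eta^2) is a Chetaev function: in a small box around the
   equilibrium, V' >= lam V / 2 wherever V > 0.  Starting from V = sigma > 0 arbitrarily
   close to the equilibrium, a solution must therefore leave the box.  Solutions are
   obtained by Picard iteration for the vector field clamped to the box, which is
   bounded and globally Lipschitz and agrees with the original field inside the box. *)

Lemma Rabs_add_le x y A B : Rabs x <= A -> Rabs y <= B -> Rabs (x + y) <= A + B.
Proof. intros. eapply Rle_trans; [apply Rabs_triang | lra]. Qed.

Lemma Rabs_sub_le x y A B : Rabs x <= A -> Rabs y <= B -> Rabs (x - y) <= A + B.
Proof. intros. apply Rabs_add_le; auto. rewrite Rabs_Ropp; auto. Qed.

Lemma Rabs_mul_le x y A B : Rabs x <= A -> Rabs y <= B -> Rabs (x * y) <= A * B.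
Proof. intros. rewrite Rabs_mult. apply Rmult_le_compat; auto; apply Rabs_pos. Qed.

Lemma continuous_of_lipschitz (f : R -> R) K : 0 <= K ->
  (forall s t, Rabs (f s - f t) <= K * Rabs (s - t)) -> forall t, continuous f t.
Proof.
  intros HK Hf t. apply continuity_pt_filterlim.
  intros eps Heps. exists (eps / (K + 1)). split.
  { apply Rdiv_lt_0_compat; lra. }
  intros s [_ Hs]. simpl in *. unfold R_dist in *.
  apply Rle_lt_trans with (K * (eps / (K + 1))).
  - eapply Rle_trans; [apply Hf|]. apply Rmult_le_compat_l; lra.
  - apply Rlt_le_trans with ((K + 1) * (eps / (K + 1))).
    + apply Rmult_lt_compat_r; [apply Rdiv_lt_0_compat|]; lra.
    + right; field; lra.
Qed.

Lemma ex_RInt_continuous_R (g : R -> R) a b :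
  (forall u, continuous g u) -> ex_RInt g a b.
Proof. intros Hg. apply (@ex_RInt_continuous R_CompleteNormedModule); auto. Qed.

Lemma RInt_sub_le (g : R -> R) K s t : (forall u, continuous g u) ->
  (forall u, Rabs (g u) <= K) -> Rabs (RInt g 0 s - RInt g 0 t) <= K * Rabs (s - t).
Proof.
  intros Hc Hb.
  assert (Hex : forall a b, ex_RInt g a b) by (intros; apply ex_RInt_continuous_R, Hc).
  assert (Hs : RInt g 0 s = RInt g 0 t + RInt g t s :> R)
    by (symmetry; exact (RInt_Chasles g 0 t s (Hex _ _) (Hex _ _))).
  rewrite Hs, Rplus_minus_l.
  rewrite Rmult_comm. destruct (Rle_dec t s) as [Hts|Hts].
  - rewrite (Rabs_right (s - t)) by lra. apply abs_RInt_le_const; auto.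
  - rewrite <- (opp_RInt_swap g s t) by auto.
    change (Rabs (- RInt g s t) <= Rabs (s - t) * K).
    rewrite Rabs_Ropp, (Rabs_left (s - t)) by lra. replace (- (s - t)) with (t - s) by ring.
    apply abs_RInt_le_const; auto; lra.
Qed.

Lemma abs_RInt_le_pow_nonneg (g : R -> R) C k t : 0 <= t -> (forall u, continuous g u) ->
  (forall u, 0 <= u <= t -> Rabs (g u) <= C * u ^ k) ->
  Rabs (RInt g 0 t) <= C * t ^ S k / INR (S k).
Proof.
  intros Ht Hc Hb.
  assert (Hk : INR (S k) <> 0) by (apply not_0_INR; lia).
  set (h := fun u => C * u ^ k).
  assert (Hh : is_RInt h 0 t (C * t ^ S k / INR (S k))).
  { replace (C * t ^ S k / INR (S k))
      with (minus (C * t ^ S k / INR (S k)) (C * 0 ^ S k / INR (S k)))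
      by (unfold minus, plus, opp; simpl; field; auto).
    apply (@is_RInt_derive R_CompleteNormedModule (fun u => C * u ^ S k / INR (S k)) h).
    - intros u _. unfold h. auto_derive; auto.
      change (match k with 0%nat => 1 | S _ => INR k + 1 end) with (INR (S k)). field. auto.
    - intros u _. apply (ex_derive_continuous h). unfold h. auto_derive. auto. }
  rewrite <- (is_RInt_unique _ _ _ _ Hh).
  eapply Rle_trans.
  { apply abs_RInt_le; auto. apply ex_RInt_continuous_R, Hc. }
  apply RInt_le; auto.
  - apply (ex_RInt_continuous_R (fun u => Rabs (g u))).
    intros u. apply continuous_comp; auto. apply continuous_Rabs.
  - eexists; eauto.
  - intros u Hu. apply Hb. lra.
Qed.

Lemma abs_RInt_le_pow (g : R -> R) C k t : (forall u, continuous g u) ->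
  (forall u, Rabs u <= Rabs t -> Rabs (g u) <= C * Rabs u ^ k) ->
  Rabs (RInt g 0 t) <= C * Rabs t ^ S k / INR (S k).
Proof.
  intros Hc Hb. destruct (Rle_dec 0 t) as [Ht|Ht].
  - rewrite (Rabs_right t) by lra. apply abs_RInt_le_pow_nonneg; auto.
    intros u Hu. replace (u ^ k) with (Rabs u ^ k) by (rewrite Rabs_right; lra).
    apply Hb. rewrite (Rabs_right u), (Rabs_right t); lra.
  - set (h := fun u => - g (- u)).
    assert (Hhc : forall u, continuous h u).
    { intros u. apply (continuous_opp (fun u => g (- u))).
      apply continuous_comp; auto. apply (ex_derive_continuous Ropp). auto_derive; auto. }
    assert (Hint : RInt g 0 t = RInt h 0 (- t)).
    { symmetry. apply is_RInt_unique. unfold h.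
      apply (is_RInt_comp_opp (V := R_NormedModule) g 0 (- t)).
      rewrite Ropp_0, Ropp_involutive.
      apply (RInt_correct (V := R_CompleteNormedModule)), ex_RInt_continuous_R, Hc. }
    rewrite Hint, (Rabs_left t) by lra. apply abs_RInt_le_pow_nonneg; auto; [lra|].
    intros u Hu. unfold h. rewrite Rabs_Ropp.
    replace (u ^ k) with (Rabs (- u) ^ k) by (rewrite Rabs_Ropp, Rabs_right; lra).
    apply Hb.
    rewrite Rabs_Ropp, (Rabs_right u), (Rabs_left t); lra.
Qed.

Lemma half_pow_lt c eps : 0 < eps -> exists N, forall n, (N <= n)%nat -> Rabs c * (/ 2) ^ n < eps.
Proof.
  intros He. assert (Hc := Rabs_pos c).
  destruct (pow_lt_1_zero (/ 2)) with (y := eps / (Rabs c + 1)) as [N HN].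
  - rewrite Rabs_right; lra.
  - apply Rdiv_lt_0_compat; lra.
  - exists N. intros n Hn. specialize (HN n Hn).
    rewrite Rabs_right in HN by (apply Rle_ge, pow_le; lra).
    apply Rle_lt_trans with ((Rabs c + 1) * (/ 2) ^ n).
    + apply Rmult_le_compat_r; [apply pow_le|]; lra.
    + apply Rmult_lt_reg_l with (/ (Rabs c + 1)); [apply Rinv_0_lt_compat; lra|].
      rewrite <- Rmult_assoc, Rinv_l by lra. lra.
Qed.

Lemma le_of_le_add_half_pow a b c : (forall n, a <= b + c * (/ 2) ^ n) -> a <= b.
Proof.
  intros H. destruct (Rle_dec a b) as [|Hab]; auto.
  destruct (half_pow_lt c (a - b)) as [N HN]; [lra|].
  specialize (HN N (le_n N)). specialize (H N).
  assert (c * (/ 2) ^ N <= Rabs c * (/ 2) ^ N)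
    by (apply Rmult_le_compat_r; [apply pow_le; lra | apply Rle_abs]).
  lra.
Qed.

Lemma is_lim_seq_of_half_pow_cauchy (u : nat -> R) c :
  (forall n m, Rabs (u (n + m)%nat - u n) <= c * (/ 2) ^ n) ->
  exists l, is_lim_seq u l /\ forall n, Rabs (l - u n) <= c * (/ 2) ^ n.
Proof.
  intros H.
  assert (Hcau : ex_lim_seq_cauchy u).
  { intros eps. destruct (half_pow_lt (2 * c) eps) as [N HN]; [apply cond_pos|].
    exists N. intros n m Hn Hm.
    replace n with (N + (n - N))%nat by lia. replace m with (N + (m - N))%nat by lia.
    assert (H1 := H N (n - N)%nat). assert (H2 := H N (m - N)%nat).
    specialize (HN N (le_n N)). rewrite Rabs_mult, (Rabs_right 2) in HN by lra.
    assert (c * (/ 2) ^ N <= Rabs c * (/ 2) ^ N)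
      by (apply Rmult_le_compat_r; [apply pow_le; lra | apply Rle_abs]).
    replace (u (N + (n - N))%nat - u (N + (m - N))%nat) with
      ((u (N + (n - N))%nat - u N) - (u (N + (m - N))%nat - u N)) by ring.
    eapply Rle_lt_trans; [apply Rabs_triang|]. rewrite Rabs_Ropp. lra. }
  apply ex_lim_seq_cauchy_corr in Hcau. destruct Hcau as [l Hl].
  exists l. split; auto. intros n.
  assert (Hv : is_lim_seq (fun m => Rabs (u (n + m)%nat - u n)) (Rabs (l - u n))).
  { apply (is_lim_seq_abs _ (Finite (l - u n))), is_lim_seq_minus'.
    - apply (is_lim_seq_ext (fun m => u (m + n)%nat)).
      + intros m. now rewrite Nat.add_comm.
      + apply (is_lim_seq_incr_n u n l), Hl.
    - apply is_lim_seq_const. }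
  exact (is_lim_seq_le _ _ _ _ (H n) Hv (is_lim_seq_const _)).
Qed.

Lemma pow_div_fact_bounded a : exists K, forall n, a ^ n / INR (fact n) <= K.
Proof.
  destruct (cv_speed_pow_fact a 1 Rlt_0_1) as [N HN].
  exists (Rmax 1 ((1 + Rabs a) ^ N)). intros n.
  destruct (le_lt_dec N n) as [Hn|Hn].
  - specialize (HN n Hn). unfold R_dist in HN. rewrite Rminus_0_r in HN.
    eapply Rle_trans; [apply Rle_abs|]. eapply Rle_trans; [left; apply HN|]. apply Rmax_l.
  - eapply Rle_trans; [|apply Rmax_r].
    assert (Hf : 1 <= INR (fact n)) by (apply (le_INR 1), lt_O_fact).
    eapply Rle_trans; [apply Rle_abs|].
    rewrite Rabs_div, <- RPow_abs, (Rabs_right (INR (fact n))) by lra.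
    eapply Rle_trans with (Rabs a ^ n).
    + unfold Rdiv. rewrite <- (Rmult_1_r (Rabs a ^ n)) at 2.
      apply Rmult_le_compat_l; [apply pow_le, Rabs_pos|].
      rewrite <- Rinv_1. apply Rinv_le_contravar; lra.
    + assert (Hp := Rabs_pos a).
      apply Rle_trans with ((1 + Rabs a) ^ n); [apply pow_incr; lra|].
      apply Rle_pow; [lra | lia].
Qed.

Lemma continuous_neg_near (g : R -> R) t : continuous g t -> g t < 0 ->
  exists del, 0 < del /\ forall s, Rabs (s - t) < del -> g s < 0.
Proof.
  intros Hc Hg.
  assert (Hloc : locally (g t) (fun y : R => y < 0)).
  { exists (mkposreal _ (Ropp_0_gt_lt_contravar _ Hg)). intros y Hy.
    apply Rabs_lt_between' in Hy. simpl in Hy. unfold minus, plus, opp in Hy. simpl in Hy. lra. }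
  destruct (Hc _ Hloc) as [del Hdel].
  exists del. split; [apply cond_pos|]. intros s Hs. apply Hdel. exact Hs.
Qed.

Lemma sup_neg_prefix (g : R -> R) T : g 0 < 0 -> (exists t, 0 <= t <= T /\ 0 <= g t) ->
  exists t1, 0 <= t1 <= T /\ (forall s, 0 <= s < t1 -> g s < 0) /\
    forall t', t1 < t' -> exists s, 0 <= s <= t' /\ 0 <= g s.
Proof.
  intros Hg0 [t [Ht Hgt]].
  set (E := fun t => 0 <= t <= T /\ forall s, 0 <= s <= t -> g s < 0).
  assert (HE0 : E 0) by (split; [lra | intros s Hs; replace s with 0 by lra; auto]).
  destruct (completeness E) as [t1 [Hub Hlub]].
  { exists T. intros x [Hx _]. lra. }
  { exists 0. exact HE0. }
  exists t1. split; [split; [apply Hub, HE0 | apply Hlub; intros x [Hx _]; lra]|]. split.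
  - intros s Hs. apply NNPP. intros Hgs.
    assert (Hs' : is_upper_bound E s).
    { intros x [_ Hx]. destruct (Rle_dec x s) as [|Hxs]; auto.
      exfalso. apply Hgs, Hx. apply Rnot_le_lt in Hxs. lra. }
    specialize (Hlub s Hs'). lra.
  - intros t' Ht'. apply NNPP. intros Hno.
    destruct (Rle_dec t' T) as [HtT|HtT].
    + assert (Et' : E t').
      { split; [specialize (Hub 0 HE0); lra|]. intros s Hs.
        apply Rnot_le_lt. intros Hgs. apply Hno. exists s. split; lra. }
      specialize (Hub t' Et'). lra.
    + apply Hno. exists t. split; [lra | auto].
Qed.

Lemma first_zero (g : R -> R) T : (forall t, continuous g t) -> g 0 < 0 ->
  (exists t, 0 <= t <= T /\ 0 <= g t) ->
  exists t1, 0 < t1 <= T /\ g t1 = 0 /\ forall s, 0 <= s < t1 -> g s < 0.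
Proof.
  intros Hc Hg0 Hex.
  destruct (sup_neg_prefix g T Hg0 Hex) as [t1 [Ht1 [Hbelow Habove]]].
  assert (Hge : 0 <= g t1).
  { apply Rnot_lt_le. intros Hlt.
    destruct (continuous_neg_near g t1) as [del [Hdel Hnear]]; auto.
    destruct (Habove (t1 + del / 2)) as [s [Hs Hgs]]; [lra|].
    destruct (Rlt_dec s t1); [specialize (Hbelow s ltac:(lra)); lra|].
    assert (g s < 0); [|lra]. apply Hnear. unfold Rabs; destruct Rcase_abs; lra. }
  assert (Ht10 : 0 < t1) by (destruct (Req_dec t1 0) as [E0|]; [rewrite E0 in Hge|]; lra).
  assert (Hle : g t1 <= 0).
  { apply Rnot_lt_le. intros Hlt.
    destruct (continuous_neg_near (fun s => - g s) t1) as [del [Hdel Hnear]]; [|lra|].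
    { apply (continuous_opp g), Hc. }
    set (s := Rmax 0 (t1 - del / 2)).
    assert (g s < 0) by (apply Hbelow; unfold s, Rmax; destruct Rle_dec; lra).
    assert (- g s < 0); [|lra].
    apply Hnear. unfold s, Rmax; destruct Rle_dec; unfold Rabs; destruct Rcase_abs; lra. }
  exists t1. split; [lra|]. split; [lra | auto].
Qed.

Lemma mvt_is_derive (f df : R -> R) a b : (forall t, is_derive f t (df t)) -> a < b ->
  exists c, a < c < b /\ f b - f a = df c * (b - a).
Proof.
  intros Hf Hab. destruct (MVT_cor2 f df a b Hab) as [c [Hc1 Hc2]]; [|eauto].
  intros c _. apply is_derive_Reals, Hf.
Qed.

(* [f] never drops to [f 0 / 2]: at the first time it did, the mean value theorem on
   [0, t1] would give a positive increment. *)
Lemma growth_lower_bound (f df : R -> R) lam T : 0 < lam -> 0 < f 0 ->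
  (forall t, is_derive f t (df t)) ->
  (forall t, 0 <= t <= T -> 0 < f t -> lam * f t / 2 <= df t) ->
  forall t, 0 <= t <= T -> f 0 + lam * f 0 / 4 * t <= f t.
Proof.
  intros Hlam Hf0 Hf Hgr.
  assert (Hfc : forall t, continuous f t)
    by (intros t; apply (ex_derive_continuous f); eexists; eauto).
  assert (Hhalf : forall t, 0 <= t <= T -> f 0 / 2 < f t).
  { intros t Ht. apply Rnot_le_lt. intros Hft.
    destruct (first_zero (fun s => f 0 / 2 - f s) t) as [t1 [Ht1 [Hft1 Hbel]]].
    - intros s. apply (continuous_minus (fun _ => f 0 / 2) f); [apply continuous_const | auto].
    - cbv beta. lra.
    - exists t. split; lra.
    - destruct (mvt_is_derive f df 0 t1) as [c [Hc Hmv]]; auto; [lra|].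
      assert (Hfc1 : f 0 / 2 < f c) by (specialize (Hbel c ltac:(lra)); lra).
      assert (Hdc : lam * f c / 2 <= df c) by (apply Hgr; [split|]; lra).
      assert (0 < df c * (t1 - 0)) by (apply Rmult_lt_0_compat; nra).
      cbv beta in Hft1. lra. }
  intros t Ht. destruct (Req_dec t 0) as [->|Ht0]; [lra|].
  destruct (mvt_is_derive f df 0 t) as [c [Hc Hmv]]; auto; [lra|].
  assert (Hfc1 := Hhalf c ltac:(lra)).
  assert (Hdc : lam * f c / 2 <= df c) by (apply Hgr; [split|]; lra).
  assert (Hlow : lam * f 0 / 4 <= df c).
  { assert (0 < lam * (f c - f 0 / 2)) by (apply Rmult_lt_0_compat; lra). lra. }
  assert (lam * f 0 / 4 * t <= df c * (t - 0)) by nra. lra.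
Qed.

Lemma escape_of_growth (f df g : R -> R) lam nu :
  0 < lam -> 0 < f 0 -> g 0 < 0 ->
  (forall t, is_derive f t (df t)) -> (forall t, continuous g t) ->
  (forall t, 0 <= t -> g t <= 0 -> f t <= nu /\ (0 < f t -> lam * f t / 2 <= df t)) ->
  exists t1, 0 < t1 /\ g t1 = 0 /\ forall s, 0 <= s <= t1 -> g s <= 0.
Proof.
  intros Hlam Hf0 Hg0 Hf Hg Hin.
  (* if [g] stayed negative up to [T], [growth_lower_bound] would push [f T] above [nu] *)
  set (T := 4 * Rabs nu / (lam * f 0) + 1).
  assert (HT : 0 < T).
  { assert (0 <= 4 * Rabs nu / (lam * f 0)); [|unfold T; lra].
    apply Rmult_le_pos; [assert (Hn := Rabs_pos nu); lra|].
    left; apply Rinv_0_lt_compat, Rmult_lt_0_compat; auto. }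
  assert (Hesc : exists t, 0 <= t <= T /\ 0 <= g t).
  { apply NNPP. intros Hno.
    assert (Hneg : forall t, 0 <= t <= T -> g t <= 0).
    { intros t Ht. apply Rnot_lt_le. intros Hgt. apply Hno. exists t. split; [auto | lra]. }
    assert (HfT := growth_lower_bound f df lam T Hlam Hf0 Hf
      ltac:(intros t Ht; apply (Hin t); [lra | apply Hneg; lra]) T ltac:(lra)).
    assert (HnuT : f T <= nu) by (apply (Hin T); [lra | apply Hneg; lra]).
    assert (lam * f 0 / 4 * T = Rabs nu + lam * f 0 / 4)
      by (unfold T; field; split; lra).
    assert (Hn := Rle_abs nu). nra. }
  destruct (first_zero g T Hg Hg0 Hesc) as [t1 [Ht1 [Hgt1 Hbel]]].
  exists t1. split; [lra|]. split; auto.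
  intros s Hs. destruct (Req_dec s t1) as [->|Hne]; [lra|]. left; apply Hbel; lra.
Qed.

Lemma cubic_pos_root a2 a1 k : 0 < k ->
  exists lam, 0 < lam /\ lam ^ 3 + a2 * lam ^ 2 + a1 * lam - k = 0.
Proof.
  intros Hk. set (P := fun s => s ^ 3 + a2 * s ^ 2 + a1 * s - k).
  set (s1 := 1 + Rabs a1 + Rabs a2 + k).
  assert (H1 := Rabs_pos a1). assert (H2 := Rabs_pos a2).
  assert (Hs1 : 1 <= s1) by (unfold s1; lra).
  assert (HP1 : 0 < P s1).
  { assert (- Rabs a2 <= a2) by (unfold Rabs; destruct Rcase_abs; lra).
    assert (- Rabs a1 <= a1) by (unfold Rabs; destruct Rcase_abs; lra).
    assert (Hsq : 1 <= s1 ^ 2) by nra.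
    assert (Hs1s : s1 <= s1 ^ 2) by nra.
    assert (a2 * s1 ^ 2 >= - (Rabs a2 * s1 ^ 2)) by nra.
    assert (a1 * s1 >= - (Rabs a1 * s1 ^ 2)) by nra.
    unfold P. replace (s1 ^ 3) with ((1 + Rabs a1 + Rabs a2 + k) * s1 ^ 2)
      by (unfold s1; ring). nra. }
  destruct (IVT P 0 s1) as [z [Hz HPz]]; [unfold P; reg | lra | unfold P; simpl; lra | auto |].
  exists z. split; [|exact HPz].
  destruct Hz as [[Hz|Hz] _]; auto. subst z. unfold P in HPz. simpl in HPz. lra.
Qed.

(** * Global flow of a bounded Lipschitz vector field on R^3 *)

Definition is_coord (pr : R * R * R -> R) : Prop := pr = st1 \/ pr = st2 \/ pr = st3.

Definition coord_close (d : R) (z z' : R * R * R) : Prop :=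
  forall pr, is_coord pr -> Rabs (pr z - pr z') <= d.

Definition bdd_lip (h : R * R * R -> R) (B L : R) : Prop :=
  (forall z, Rabs (h z) <= B) /\
  (forall z z' d, coord_close d z z' -> Rabs (h z - h z') <= L * d).

Definition coord_lipschitz (y : R -> R * R * R) (K : R) : Prop :=
  forall pr s t, is_coord pr -> Rabs (pr (y s) - pr (y t)) <= K * Rabs (s - t).

Lemma coord_close_nonneg d z z' : coord_close d z z' -> 0 <= d.
Proof. intros H. eapply Rle_trans; [apply Rabs_pos | apply (H st1); left; reflexivity]. Qed.

Lemma bdd_lip_nonneg h B L : bdd_lip h B L -> 0 <= B /\ 0 <= L.
Proof.
  intros [Hb Hl]. split.
  - eapply Rle_trans; [apply Rabs_pos | apply (Hb ((0, 0), 0))].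
  - assert (H := Hl ((0, 0), 0) ((0, 0), 0) 1).
    rewrite Rminus_diag, Rabs_R0, Rmult_1_r in H. apply H.
    intros pr _. rewrite Rminus_diag, Rabs_R0. lra.
Qed.

Lemma bdd_lip_weaken h B L B' L' : bdd_lip h B L -> B <= B' -> L <= L' -> bdd_lip h B' L'.
Proof.
  intros [Hb Hl] HB HL. split.
  - intros z. eapply Rle_trans; eauto.
  - intros z z' d Hd. eapply Rle_trans; [apply (Hl _ _ _ Hd)|].
    apply Rmult_le_compat_r; auto. eapply coord_close_nonneg; eauto.
Qed.

Lemma bdd_lip_const c : bdd_lip (fun _ => c) (Rabs c) 0.
Proof.
  split; [intros; lra|]. intros z z' d Hd.
  rewrite Rminus_diag, Rabs_R0. lra.
Qed.

Lemma bdd_lip_add f g Bf Lf Bg Lg : bdd_lip f Bf Lf -> bdd_lip g Bg Lg ->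
  bdd_lip (fun z => f z + g z) (Bf + Bg) (Lf + Lg).
Proof.
  intros [Hfb Hfl] [Hgb Hgl]. split.
  - intros z. eapply Rle_trans; [apply Rabs_triang|]. apply Rplus_le_compat; auto.
  - intros z z' d Hd. replace (f z + g z - (f z' + g z')) with ((f z - f z') + (g z - g z'))
      by ring.
    eapply Rle_trans; [apply Rabs_triang|]. rewrite Rmult_plus_distr_r.
    apply Rplus_le_compat; auto.
Qed.

Lemma bdd_lip_sub f g Bf Lf Bg Lg : bdd_lip f Bf Lf -> bdd_lip g Bg Lg ->
  bdd_lip (fun z => f z - g z) (Bf + Bg) (Lf + Lg).
Proof.
  intros Hf [Hgb Hgl].
  apply (bdd_lip_add f (fun z => - g z)); auto. split.
  - intros z. rewrite Rabs_Ropp. auto.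
  - intros z z' d Hd. rewrite <- Rabs_Ropp. replace (- (- g z - - g z')) with (g z - g z')
      by ring. auto.
Qed.

Lemma bdd_lip_mul f g Bf Lf Bg Lg : bdd_lip f Bf Lf -> bdd_lip g Bg Lg ->
  bdd_lip (fun z => f z * g z) (Bf * Bg) (Bf * Lg + Bg * Lf).
Proof.
  intros [Hfb Hfl] [Hgb Hgl]. split.
  - intros z. rewrite Rabs_mult. apply Rmult_le_compat; auto; apply Rabs_pos.
  - intros z z' d Hd. replace (f z * g z - f z' * g z')
      with (f z * (g z - g z') + g z' * (f z - f z')) by ring.
    eapply Rle_trans; [apply Rabs_triang|]. rewrite !Rabs_mult.
    replace ((Bf * Lg + Bg * Lf) * d) with (Bf * (Lg * d) + Bg * (Lf * d)) by ring.
    apply Rplus_le_compat; apply Rmult_le_compat; auto; apply Rabs_pos.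
Qed.

Section Picard.

Variables (G : R * R * R -> R * R * R) (M L : R) (y0 : R * R * R).
Hypotheses (HM : 0 <= M) (HL : 0 <= L)
  (HG : forall pr, is_coord pr -> bdd_lip (fun z => pr (G z)) M L).

Fixpoint picard (n : nat) (t : R) : R * R * R :=
  match n with
  | O => y0
  | S m => ((st1 y0 + RInt (fun s => st1 (G (picard m s))) 0 t,
             st2 y0 + RInt (fun s => st2 (G (picard m s))) 0 t),
             st3 y0 + RInt (fun s => st3 (G (picard m s))) 0 t)
  end.

Lemma picard_S n t pr : is_coord pr ->
  pr (picard (S n) t) = pr y0 + RInt (fun s => pr (G (picard n s))) 0 t.
Proof. intros [->|[-> | ->]]; reflexivity. Qed.

Lemma continuous_field_along y K : 0 <= K -> coord_lipschitz y K ->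
  forall pr u, is_coord pr -> continuous (fun s => pr (G (y s))) u.
Proof.
  intros HK Hy pr u Hpr. apply continuous_of_lipschitz with (L * K).
  - apply Rmult_le_pos; auto.
  - intros s t. rewrite Rmult_assoc. apply (HG pr Hpr).
    intros pr' Hpr'. apply Hy; auto.
Qed.

Lemma picard_lipschitz n : coord_lipschitz (picard n) M.
Proof.
  induction n as [|n IH]; intros pr s t Hpr.
  - rewrite Rminus_diag, Rabs_R0. apply Rmult_le_pos; auto; apply Rabs_pos.
  - rewrite !picard_S by auto.
    replace (pr y0 + RInt (fun u => pr (G (picard n u))) 0 s -
      (pr y0 + RInt (fun u => pr (G (picard n u))) 0 t))
      with (RInt (fun u => pr (G (picard n u))) 0 s - RInt (fun u => pr (G (picard n u))) 0 t)
      by ring.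
    apply RInt_sub_le.
    + intros u. apply (continuous_field_along _ M); auto.
    + intros u. apply (HG pr Hpr).
Qed.

Lemma continuous_field_picard n pr u : is_coord pr ->
  continuous (fun s => pr (G (picard n s))) u.
Proof. apply (continuous_field_along _ M); auto. apply picard_lipschitz. Qed.

Lemma picard_step_le n pr t : is_coord pr ->
  Rabs (pr (picard (S n) t) - pr (picard n t))
    <= M * L ^ n * Rabs t ^ S n / INR (fact (S n)).
Proof.
  revert pr t. induction n as [|n IH]; intros pr t Hpr.
  - rewrite picard_S by auto. simpl picard. rewrite Rplus_minus_l.
    replace (M * L ^ 0 * Rabs t ^ 1 / INR (fact 1)) with (M * Rabs t ^ 1 / INR 1)
      by (simpl; field).
    apply abs_RInt_le_pow; [intros; apply continuous_const|].
    intros u _. rewrite pow_O, Rmult_1_r. apply (HG pr Hpr).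
  - rewrite !picard_S by auto.
    set (g1 := fun s => pr (G (picard (S n) s))).
    set (g0 := fun s => pr (G (picard n s))).
    assert (Hc1 : forall u, continuous g1 u) by (intros; apply continuous_field_picard; auto).
    assert (Hc0 : forall u, continuous g0 u) by (intros; apply continuous_field_picard; auto).
    assert (E : @eq R (pr y0 + RInt g1 0 t - (pr y0 + RInt g0 0 t))
                      (RInt (fun s => g1 s - g0 s) 0 t)).
    { rewrite (RInt_minus g1 g0) by (apply ex_RInt_continuous_R; auto).
      unfold minus, plus, opp; simpl. ring. }
    rewrite E.
    assert (Hf : INR (fact (S n)) <> 0) by (apply not_0_INR, fact_neq_0).
    replace (M * L ^ S n * Rabs t ^ S (S n) / INR (fact (S (S n))))
      with (L * (M * L ^ n / INR (fact (S n))) * Rabs t ^ S (S n) / INR (S (S n)))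
      by (rewrite (fact_simpl (S n)), mult_INR; simpl pow; field; split; auto;
          apply not_0_INR; lia).
    apply abs_RInt_le_pow.
    + intros u. apply (continuous_minus g1 g0); auto.
    + intros u _. unfold g1, g0.
      replace (L * (M * L ^ n / INR (fact (S n))) * Rabs u ^ S n)
        with (L * (M * L ^ n * Rabs u ^ S n / INR (fact (S n)))) by (field; auto).
      apply (HG pr Hpr). intros pr' Hpr'. apply IH; auto.
Qed.

Lemma picard_step_le_half_pow Sb : 0 <= Sb -> exists K, forall n pr t, is_coord pr ->
  Rabs t <= Sb -> Rabs (pr (picard (S n) t) - pr (picard n t)) <= K * (/ 2) ^ n.
Proof.
  intros HSb. destruct (pow_div_fact_bounded (2 * L * Sb)) as [K0 HK0].
  exists (M * Sb * K0). intros n pr t Hpr Ht.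
  eapply Rle_trans; [apply picard_step_le; auto|].
  assert (Hf : 0 < INR (fact n)) by (apply lt_0_INR, lt_O_fact).
  assert (Hfs : INR (fact n) <= INR (fact (S n))).
  { rewrite fact_simpl, mult_INR, <- (Rmult_1_l (INR (fact n))) at 1.
    apply Rmult_le_compat_r; [lra|]. apply (le_INR 1). lia. }
  assert (HLn : 0 <= M * L ^ n) by (apply Rmult_le_pos; auto; apply pow_le; auto).
  apply Rle_trans with (M * L ^ n * Sb ^ S n / INR (fact n)).
  - unfold Rdiv. apply Rmult_le_compat.
    + apply Rmult_le_pos; auto. apply pow_le, Rabs_pos.
    + left; apply Rinv_0_lt_compat, lt_0_INR, lt_O_fact.
    + apply Rmult_le_compat_l; auto. apply pow_incr. split; auto. apply Rabs_pos.
    + apply Rinv_le_contravar; auto.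
  - replace (M * L ^ n * Sb ^ S n / INR (fact n))
      with (M * Sb * ((2 * L * Sb) ^ n / INR (fact n)) * (/ 2) ^ n).
    2:{ assert (H2 : 2 ^ n * (/ 2) ^ n = 1)
          by (rewrite <- Rpow_mult_distr, Rinv_r, pow1; lra).
        rewrite !Rpow_mult_distr.
        transitivity (M * Sb * (L ^ n * Sb ^ n / INR (fact n)) * (2 ^ n * (/ 2) ^ n)).
        - unfold Rdiv. ring.
        - rewrite H2. simpl pow. field. lra. }
    apply Rmult_le_compat_r; [apply pow_le; lra|].
    apply Rmult_le_compat_l; [apply Rmult_le_pos; auto|]. apply HK0.
Qed.

Lemma picard_cauchy Sb : 0 <= Sb -> exists K, forall n m pr t, is_coord pr ->
  Rabs t <= Sb -> Rabs (pr (picard (n + m) t) - pr (picard n t)) <= K * (/ 2) ^ n.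
Proof.
  intros HSb. destruct (picard_step_le_half_pow Sb HSb) as [K HK].
  exists (2 * K). intros n m pr t Hpr Ht.
  assert (Htel : Rabs (pr (picard (n + m) t) - pr (picard n t))
                   <= 2 * K * (/ 2) ^ n - 2 * K * (/ 2) ^ (n + m)).
  { induction m as [|m IH].
    - rewrite Nat.add_0_r, Rminus_diag, Rabs_R0. lra.
    - replace (n + S m)%nat with (S (n + m)) by lia.
      replace (pr (picard (S (n + m)) t) - pr (picard n t)) with
        ((pr (picard (S (n + m)) t) - pr (picard (n + m) t))
         + (pr (picard (n + m) t) - pr (picard n t))) by ring.
      eapply Rle_trans; [apply Rabs_triang|].
      specialize (HK (n + m)%nat pr t Hpr Ht). simpl pow. lra. }
  assert (HK0 : 0 <= K).
  { eapply Rle_trans with (Rabs (pr (picard 1 t) - pr (picard 0 t))); [apply Rabs_pos|].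
    rewrite <- (Rmult_1_r K). apply (HK 0%nat); auto. }
  assert (0 <= 2 * K * (/ 2) ^ (n + m)) by (apply Rmult_le_pos; [lra | apply pow_le; lra]).
  lra.
Qed.

Definition picard_lim (t : R) : R * R * R :=
  ((real (Lim_seq (fun n => st1 (picard n t))), real (Lim_seq (fun n => st2 (picard n t)))),
    real (Lim_seq (fun n => st3 (picard n t)))).

Lemma picard_lim_coord t pr : is_coord pr ->
  pr (picard_lim t) = real (Lim_seq (fun n => pr (picard n t))).
Proof. intros [->|[-> | ->]]; reflexivity. Qed.

Lemma picard_lim_approx Sb : 0 <= Sb -> exists K, forall n pr t, is_coord pr ->
  Rabs t <= Sb -> Rabs (pr (picard_lim t) - pr (picard n t)) <= K * (/ 2) ^ n.
Proof.
  intros HSb. destruct (picard_cauchy Sb HSb) as [K HK].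
  exists K. intros n pr t Hpr Ht.
  destruct (is_lim_seq_of_half_pow_cauchy (fun n => pr (picard n t)) K) as [l [Hlim Hl]].
  { intros; apply HK; auto. }
  rewrite picard_lim_coord, (is_lim_seq_unique _ _ Hlim) by auto. apply Hl.
Qed.

Lemma picard_lim_lipschitz : coord_lipschitz picard_lim M.
Proof.
  intros pr s t Hpr.
  assert (Hs := Rabs_pos s). assert (Ht := Rabs_pos t).
  destruct (picard_lim_approx (Rabs s + Rabs t)) as [K HK]; [lra|].
  apply (le_of_le_add_half_pow _ _ (2 * K)). intros n.
  assert (H1 : Rabs (pr (picard_lim s) - pr (picard n s)) <= K * (/ 2) ^ n)
    by (apply HK; auto; lra).
  assert (H2 : Rabs (pr (picard_lim t) - pr (picard n t)) <= K * (/ 2) ^ n)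
    by (apply HK; auto; lra).
  assert (H3 := picard_lipschitz n pr s t Hpr).
  replace (pr (picard_lim s) - pr (picard_lim t)) with
    ((pr (picard_lim s) - pr (picard n s)) + (pr (picard n s) - pr (picard n t))
     - (pr (picard_lim t) - pr (picard n t))) by ring.
  eapply Rle_trans; [apply Rabs_triang|]. rewrite Rabs_Ropp.
  eapply Rle_trans; [apply Rplus_le_compat_r, Rabs_triang|]. lra.
Qed.

Lemma picard_lim_integral t pr : is_coord pr ->
  pr (picard_lim t) = pr y0 + RInt (fun s => pr (G (picard_lim s))) 0 t.
Proof.
  intros Hpr.
  destruct (picard_lim_approx (Rabs t) (Rabs_pos t)) as [K HK].
  set (g := fun s => pr (G (picard_lim s))).
  assert (Hg : forall u, continuous g u)
    by (intros; apply (continuous_field_along _ M); auto; apply picard_lim_lipschitz).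
  assert (Habs : Rabs (pr (picard_lim t) - (pr y0 + RInt g 0 t)) <= 0).
  { apply (le_of_le_add_half_pow _ _ (K + L * K * Rabs t)). intros n.
    set (gn := fun s => pr (G (picard n s))).
    assert (Hgn : forall u, continuous gn u) by (intros; apply continuous_field_picard; auto).
    assert (E : @eq R (pr (picard_lim t) - (pr y0 + RInt g 0 t))
      ((pr (picard_lim t) - pr (picard (S n) t)) + RInt (fun s => gn s - g s) 0 t)).
    { rewrite picard_S, (RInt_minus gn g) by (auto; apply ex_RInt_continuous_R; auto).
      unfold minus, plus, opp; simpl. unfold gn. ring. }
    rewrite E. eapply Rle_trans; [apply Rabs_triang|].
    assert (H1 := HK (S n) pr t Hpr (Rle_refl _)).
    assert (H2 : Rabs (RInt (fun s => gn s - g s) 0 t)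
                   <= L * (K * (/ 2) ^ n) * Rabs t ^ 1 / INR 1).
    { apply abs_RInt_le_pow.
      - intros u. apply (continuous_minus gn g); auto.
      - intros u Hu. rewrite pow_O, Rmult_1_r. unfold gn, g.
        apply (HG pr Hpr). intros pr' Hpr'.
        rewrite <- Rabs_Ropp, Ropp_minus_distr. apply HK; auto. }
    simpl pow in H1, H2. simpl INR in H2.
    assert (0 <= K * (/ 2) ^ n).
    { eapply Rle_trans; [apply Rabs_pos|]. apply (HK n pr t Hpr), Rle_refl. }
    replace (L * (K * (/ 2) ^ n) * (Rabs t * 1) / 1) with (L * K * Rabs t * (/ 2) ^ n)
      in H2 by field.
    nra. }
  assert (Z := Rabs_pos (pr (picard_lim t) - (pr y0 + RInt g 0 t))).
  assert (Rabs (pr (picard_lim t) - (pr y0 + RInt g 0 t)) = 0) as H0 by lra.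
  apply Rabs_eq_0 in H0. lra.
Qed.

Lemma picard_lim_derive t pr : is_coord pr ->
  is_derive (fun s => pr (picard_lim s)) t (pr (G (picard_lim t))).
Proof.
  intros Hpr. set (g := fun s => pr (G (picard_lim s))).
  assert (Hg : forall u, continuous g u)
    by (intros; apply (continuous_field_along _ M); auto; apply picard_lim_lipschitz).
  apply is_derive_ext with (fun s => pr y0 + RInt g 0 s).
  { intros s. symmetry. apply picard_lim_integral; auto. }
  rewrite <- (Rplus_0_l (pr (G (picard_lim t)))).
  apply (is_derive_plus (fun _ => pr y0) (fun s => RInt g 0 s)).
  - apply (@is_derive_const R_AbsRing R_NormedModule).
  - apply (is_derive_RInt g (fun s => RInt g 0 s) 0 t); auto.
    exists (mkposreal 1 Rlt_0_1). intros b _.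
    apply (@RInt_correct R_CompleteNormedModule), ex_RInt_continuous_R; auto.
Qed.

Lemma picard_lim_0 : picard_lim 0 = y0.
Proof.
  assert (Hk : forall pr, is_coord pr -> forall n, pr (picard n 0) = pr y0).
  { intros pr Hpr [|n]; [reflexivity|]. rewrite picard_S, RInt_point by auto.
    unfold zero; simpl. ring. }
  destruct y0 as [[a b] c]. unfold picard_lim.
  rewrite (Lim_seq_ext _ _ (Hk st1 ltac:(left; reflexivity))),
    (Lim_seq_ext _ _ (Hk st2 ltac:(right; left; reflexivity))),
    (Lim_seq_ext _ _ (Hk st3 ltac:(right; right; reflexivity))), !Lim_seq_const.
  reflexivity.
Qed.

End Picard.

Theorem ode_global_solution G M L y0 : 0 <= M -> 0 <= L ->
  (forall pr, is_coord pr -> bdd_lip (fun z => pr (G z)) M L) ->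
  exists y : R -> R * R * R, y 0 = y0 /\
    forall t pr, is_coord pr -> is_derive (fun s => pr (y s)) t (pr (G (y t))).
Proof.
  intros HM HL HG. exists (picard_lim G y0). split.
  - apply picard_lim_0.
  - intros t pr Hpr. apply (picard_lim_derive G M L); auto.
Qed.

(** * The vector field clamped to a box *)

Definition clamp1 (a m x : R) : R := Rmax (m - a) (Rmin (m + a) x).

Definition clamp (a : R) (e c : R * R * R) : R * R * R :=
  ((clamp1 a (st1 e) (st1 c), clamp1 a (st2 e) (st2 c)), clamp1 a (st3 e) (st3 c)).

Lemma clamp_coord a e c pr : is_coord pr -> pr (clamp a e c) = clamp1 a (pr e) (pr c).
Proof. intros [->|[-> | ->]]; reflexivity. Qed.

Lemma bdd_lip_clamp_coord a e pr : 0 <= a -> is_coord pr ->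
  bdd_lip (fun z => pr (clamp a e z)) (Rabs (pr e) + a) 1.
Proof.
  intros Ha Hpr. split.
  - intros z. rewrite clamp_coord by auto. unfold clamp1, Rmax, Rmin.
    repeat destruct Rle_dec; unfold Rabs; repeat destruct Rcase_abs; lra.
  - intros z z' d Hd. specialize (Hd pr Hpr). rewrite !clamp_coord by auto.
    revert Hd. unfold clamp1, Rmax, Rmin.
    repeat destruct Rle_dec; unfold Rabs; repeat destruct Rcase_abs; lra.
Qed.

Lemma clamp_id a e c : coord_close a c e -> clamp a e c = c.
Proof.
  intros H. destruct c as [[x1 x2] x3].
  assert (H1 := H st1 (or_introl eq_refl)).
  assert (H2 := H st2 (or_intror (or_introl eq_refl))).
  assert (H3 := H st3 (or_intror (or_intror eq_refl))).
  revert H1 H2 H3. unfold clamp, clamp1, st1, st2, st3, Rmax, Rmin; simpl.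
  intros. repeat destruct Rle_dec; unfold Rabs in *; repeat destruct Rcase_abs; f_equal;
    try f_equal; lra.
Qed.

Ltac solve_bdd_lip :=
  repeat first
    [ eapply bdd_lip_sub | eapply bdd_lip_add | eapply bdd_lip_mul
    | eapply bdd_lip_const
    | eapply bdd_lip_clamp_coord; [assumption | unfold is_coord; auto] ].

Lemma bdd_lip_boost_PI_clamp d2 Y KP KI u0 a e : 0 <= a -> exists M L, 0 <= M /\ 0 <= L /\
  forall pr, is_coord pr -> bdd_lip (fun z => pr (boost_PI d2 Y KP KI u0 (clamp a e z))) M L.
Proof.
  intros Ha.
  assert (H1 : exists B L, bdd_lip (fun z => 1 - st2 (clamp a e z) *
    (u0 + KI * st3 (clamp a e z) + KP * (Y - st2 (clamp a e z)))) B L)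
    by (do 2 eexists; solve_bdd_lip).
  assert (H2 : exists B L, bdd_lip (fun z => - d2 * st2 (clamp a e z) + st1 (clamp a e z) *
    (u0 + KI * st3 (clamp a e z) + KP * (Y - st2 (clamp a e z)))) B L)
    by (do 2 eexists; solve_bdd_lip).
  assert (H3 : exists B L, bdd_lip (fun z => Y - st2 (clamp a e z)) B L)
    by (do 2 eexists; solve_bdd_lip).
  destruct H1 as [B1 [L1 H1]], H2 as [B2 [L2 H2]], H3 as [B3 [L3 H3]].
  destruct (bdd_lip_nonneg _ _ _ H1), (bdd_lip_nonneg _ _ _ H2), (bdd_lip_nonneg _ _ _ H3).
  exists (B1 + B2 + B3), (L1 + L2 + L3). split; [lra|]. split; [lra|].
  intros pr [->|[-> | ->]]; eapply bdd_lip_weaken; eauto; lra.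
Qed.

Lemma continuous_dist3 (y : R -> R * R * R) e t :
  (forall pr, is_coord pr -> continuous (fun s => pr (y s)) t) ->
  continuous (fun s => dist3 (y s) e) t.
Proof.
  intros Hy. unfold dist3. apply continuous_sqrt_comp.
  assert (Hsq : forall pr, is_coord pr -> continuous (fun s => (pr (y s) - pr e) ^ 2) t).
  { intros pr Hpr. apply (continuous_comp (fun s => pr (y s)) (fun x => (x - pr e) ^ 2)).
    - apply Hy, Hpr.
    - apply (ex_derive_continuous (fun x => (x - pr e) ^ 2)). auto_derive. auto. }
  repeat apply (continuous_plus (V := R_NormedModule)); apply Hsq; unfold is_coord; auto.
Qed.

Lemma coord_close_of_dist3_le a c e : dist3 c e <= a -> coord_close a c e.
Proof.
  intros H pr Hpr. eapply Rle_trans; [|exact H]. unfold dist3.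
  rewrite <- (sqrt_pow2 (Rabs (pr c - pr e))) by apply Rabs_pos.
  apply sqrt_le_1_alt. rewrite pow2_abs.
  assert (H1 := pow2_ge_0 (st1 c - st1 e)). assert (H2 := pow2_ge_0 (st2 c - st2 e)).
  assert (H3 := pow2_ge_0 (st3 c - st3 e)).
  destruct Hpr as [->|[-> | ->]]; lra.
Qed.

Lemma dist3_le_sum a b :
  dist3 a b <= Rabs (st1 a - st1 b) + Rabs (st2 a - st2 b) + Rabs (st3 a - st3 b).
Proof.
  set (x := st1 a - st1 b). set (y := st2 a - st2 b). set (z := st3 a - st3 b).
  assert (Hx := Rabs_pos x). assert (Hy := Rabs_pos y). assert (Hz := Rabs_pos z).
  unfold dist3. fold x y z.
  rewrite <- (sqrt_pow2 (Rabs x + Rabs y + Rabs z)) by lra. apply sqrt_le_1_alt.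
  rewrite <- (pow2_abs x), <- (pow2_abs y), <- (pow2_abs z). nra.
Qed.

Definition lin3 (k1 k2 k3 : R) (w : R * R * R) : R := k1 * st1 w + k2 * st2 w + k3 * st3 w.

Lemma is_derive_lin3 (y : R -> R * R * R) t w k1 k2 k3 :
  (forall pr, is_coord pr -> is_derive (fun s => pr (y s)) t (pr w)) ->
  is_derive (fun s => lin3 k1 k2 k3 (y s)) t (lin3 k1 k2 k3 w).
Proof.
  intros Hy. unfold lin3.
  apply (is_derive_plus (fun s => k1 * st1 (y s) + k2 * st2 (y s)) (fun s => k3 * st3 (y s))).
  - apply (is_derive_plus (fun s => k1 * st1 (y s)) (fun s => k2 * st2 (y s)));
      apply is_derive_scal, Hy; unfold is_coord; auto.
  - apply is_derive_scal, Hy; unfold is_coord; auto.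
Qed.

Lemma lin3_sub_le k1 k2 k3 d z z' : coord_close d z z' ->
  Rabs (lin3 k1 k2 k3 z - lin3 k1 k2 k3 z') <= (Rabs k1 + Rabs k2 + Rabs k3) * d.
Proof.
  intros Hd. unfold lin3.
  replace (k1 * st1 z + k2 * st2 z + k3 * st3 z - (k1 * st1 z' + k2 * st2 z' + k3 * st3 z'))
    with (k1 * (st1 z - st1 z') + k2 * (st2 z - st2 z') + k3 * (st3 z - st3 z')) by ring.
  rewrite !Rmult_plus_distr_r.
  repeat apply Rabs_add_le; apply Rabs_mul_le; try apply Rle_refl; apply Hd; unfold is_coord; auto.
Qed.

Definition shift (e w : R * R * R) (sigma : R) : R * R * R :=
  ((st1 e + sigma * st1 w, st2 e + sigma * st2 w), st3 e + sigma * st3 w).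

Lemma lin3_shift k1 k2 k3 e w sigma :
  lin3 k1 k2 k3 (shift e w sigma) - lin3 k1 k2 k3 e = sigma * lin3 k1 k2 k3 w.
Proof. unfold lin3, shift, st1, st2, st3; simpl. ring. Qed.

Lemma dist3_shift e w sigma : 0 <= sigma ->
  dist3 (shift e w sigma) e <= sigma * (Rabs (st1 w) + Rabs (st2 w) + Rabs (st3 w)).
Proof.
  intros Hs. eapply Rle_trans; [apply dist3_le_sum|].
  replace (st1 (shift e w sigma) - st1 e) with (sigma * st1 w) by (unfold shift, st1; simpl; ring).
  replace (st2 (shift e w sigma) - st2 e) with (sigma * st2 w) by (unfold shift, st2; simpl; ring).
  replace (st3 (shift e w sigma) - st3 e) with (sigma * st3 w) by (unfold shift, st3; simpl; ring).
  rewrite !Rabs_mult, (Rabs_right sigma) by lra. lra.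
Qed.

(** * A Chetaev inequality *)

Lemma sum_abs_sq_le x y z : (Rabs x + Rabs y + Rabs z) ^ 2 <= 3 * (x ^ 2 + y ^ 2 + z ^ 2).
Proof.
  rewrite <- (pow2_abs x), <- (pow2_abs y), <- (pow2_abs z).
  assert (H1 := pow2_ge_0 (Rabs x - Rabs y)). assert (H2 := pow2_ge_0 (Rabs y - Rabs z)).
  assert (H3 := pow2_ge_0 (Rabs x - Rabs z)). nra.
Qed.

Lemma chetaev_error_le lam b0 b1 K beta xi et ze n1 n2 :
  0 < lam -> 0 < b0 -> 0 <= b1 -> 0 <= K -> 0 < beta ->
  beta * Rabs ze <= 1 -> beta * Rabs et <= 1 ->
  Rabs n1 <= K * (Rabs xi + Rabs et + Rabs ze) ^ 2 ->
  Rabs n2 <= K * (Rabs xi + Rabs et + Rabs ze) ^ 2 ->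
  Rabs (n2 + b1 * n1 - 2 * beta * ze * (n2 - lam * n1) - 2 * beta * b0 * et * n1)
    <= K * (1 + b1 + 2 * (1 + lam + b0)) * (Rabs xi + Rabs et + Rabs ze) ^ 2.
Proof.
  intros Hl Hb0 Hb1 HK Hbe Hbz Hbt Hn1 Hn2.
  set (B := K * (Rabs xi + Rabs et + Rabs ze) ^ 2) in *.
  assert (HB : 0 <= B) by (unfold B; apply Rmult_le_pos; auto; apply pow2_ge_0).
  apply Rle_trans with (B + b1 * B + 2 * (beta * Rabs ze) * ((1 + lam) * B)
                        + 2 * b0 * (beta * Rabs et) * B).
  - repeat apply Rabs_sub_le; [apply Rabs_add_le; auto| |].
    + rewrite Rabs_mult, (Rabs_right b1) by lra. apply Rmult_le_compat_l; auto.
    + replace (2 * (beta * Rabs ze)) with (Rabs (2 * beta * ze))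
        by (rewrite !Rabs_mult, (Rabs_right 2), (Rabs_right beta) by lra; ring).
      apply Rabs_mul_le; [lra|]. replace ((1 + lam) * B) with (B + lam * B) by ring.
      apply Rabs_sub_le; auto. rewrite Rabs_mult, (Rabs_right lam) by lra.
      apply Rmult_le_compat_l; lra.
    + replace (2 * b0 * (beta * Rabs et)) with (Rabs (2 * beta * b0 * et))
        by (rewrite !Rabs_mult, (Rabs_right 2), (Rabs_right beta), (Rabs_right b0) by lra; ring).
      apply Rabs_mul_le; lra.
  - assert (0 <= (1 + lam) * B) by (apply Rmult_le_pos; lra).
    assert (0 <= b0 * B) by (apply Rmult_le_pos; lra).
    replace (K * (1 + b1 + 2 * (1 + lam + b0)) * (Rabs xi + Rabs et + Rabs ze) ^ 2)
      with ((1 + b1 + 2 * (1 + lam + b0)) * B) by (unfold B; ring).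
    nra.
Qed.

(* The right-hand side is the derivative of [xi - beta (ze^2 + b0 et^2)] along
   [xi' = lam xi + n2 + b1 n1], [et' = ze + n1], [ze' = - b0 et - b1 ze + n2 - lam n1]. *)
Lemma chetaev_rate_ineq lam b0 b1 K beta nu xi et ze n1 n2 :
  0 < lam -> 0 < b0 -> 0 <= b1 -> 0 <= K -> 0 < beta ->
  3 * (K * (1 + b1 + 2 * (1 + lam + b0))) <= lam * Rmin 1 b0 * beta / 4 ->
  3 * (K * (1 + b1 + 2 * (1 + lam + b0))) * nu <= lam / 4 ->
  beta * nu <= 1 ->
  Rabs n1 <= K * (Rabs xi + Rabs et + Rabs ze) ^ 2 ->
  Rabs n2 <= K * (Rabs xi + Rabs et + Rabs ze) ^ 2 ->
  Rabs xi + Rabs et + Rabs ze <= nu ->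
  beta * (ze ^ 2 + b0 * et ^ 2) < xi ->
  lam * xi / 2 <= lam * xi + n2 + b1 * n1 + 2 * beta * b1 * ze ^ 2
     - 2 * beta * ze * (n2 - lam * n1) - 2 * beta * b0 * et * n1.
Proof.
  intros Hl Hb0 Hb1 HK Hbe HA1 HA2 Hbn Hn1 Hn2 HN Hreg.
  assert (Hax := Rabs_pos xi). assert (Hae := Rabs_pos et). assert (Haz := Rabs_pos ze).
  assert (HEr := chetaev_error_le lam b0 b1 K beta xi et ze n1 n2 Hl Hb0 Hb1 HK Hbe
    ltac:(apply Rle_trans with (beta * nu); [apply Rmult_le_compat_l|]; lra)
    ltac:(apply Rle_trans with (beta * nu); [apply Rmult_le_compat_l|]; lra) Hn1 Hn2).
  set (N := Rabs xi + Rabs et + Rabs ze) in *.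
  set (A := K * (1 + b1 + 2 * (1 + lam + b0))) in *.
  set (m := Rmin 1 b0) in *.
  assert (Hm : 0 < m) by (unfold m, Rmin; destruct Rle_dec; lra).
  assert (Hm2 : m <= b0) by (unfold m, Rmin; destruct Rle_dec; lra).
  assert (Hm1 : m <= 1) by (unfold m, Rmin; destruct Rle_dec; lra).
  assert (He2 := pow2_ge_0 et). assert (Hz2 := pow2_ge_0 ze).
  assert (Hq : 0 <= ze ^ 2 + b0 * et ^ 2) by nra.
  assert (Hxi : 0 < xi) by nra.
  assert (HA0 : 0 <= A) by (unfold A; apply Rmult_le_pos; lra).
  assert (Hkey : A * N ^ 2 <= lam * xi / 2).
  { assert (HN2 : N ^ 2 <= 3 * (xi ^ 2 + et ^ 2 + ze ^ 2)) by apply sum_abs_sq_le.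
    assert (Hxi2 : xi ^ 2 <= nu * xi)
      by (assert (xi <= nu) by (unfold N in HN; rewrite Rabs_right in HN by lra; lra); nra).
    assert (Hsq : m * (et ^ 2 + ze ^ 2) <= ze ^ 2 + b0 * et ^ 2) by nra.
    assert (Hs : beta * m * (et ^ 2 + ze ^ 2) <= xi) by nra.
    assert (A * N ^ 2 <= 3 * A * (xi ^ 2 + et ^ 2 + ze ^ 2)) by nra.
    assert (3 * A * xi ^ 2 <= lam * xi / 4) by nra.
    assert (3 * A * (et ^ 2 + ze ^ 2) <= lam * xi / 4).
    { apply Rmult_le_reg_r with (beta * m); [nra|].
      assert (0 <= et ^ 2 + ze ^ 2) by lra. nra. }
    nra. }
  apply Rabs_le_between in HEr.
  assert (0 <= 2 * beta * b1 * ze ^ 2) by (apply Rmult_le_pos; nra).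
  lra.
Qed.

Lemma chetaev_constants lam b0 b1 K : 0 < lam -> 0 < b0 -> 0 <= b1 -> 0 <= K ->
  exists beta nu, 0 < beta /\ 0 < nu /\ forall xi et ze n1 n2,
  Rabs n1 <= K * (Rabs xi + Rabs et + Rabs ze) ^ 2 ->
  Rabs n2 <= K * (Rabs xi + Rabs et + Rabs ze) ^ 2 ->
  Rabs xi + Rabs et + Rabs ze <= nu ->
  beta * (ze ^ 2 + b0 * et ^ 2) < xi ->
  lam * xi / 2 <= lam * xi + n2 + b1 * n1 + 2 * beta * b1 * ze ^ 2
     - 2 * beta * ze * (n2 - lam * n1) - 2 * beta * b0 * et * n1.
Proof.
  intros Hl Hb0 Hb1 HK.
  set (A := K * (1 + b1 + 2 * (1 + lam + b0))).
  assert (HA : 0 <= A) by (unfold A; apply Rmult_le_pos; lra).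
  set (m := Rmin 1 b0).
  assert (Hm : 0 < m) by (unfold m, Rmin; destruct Rle_dec; lra).
  set (beta := 12 * A / (lam * m) + 1).
  assert (Hbeta : 0 < beta).
  { assert (0 <= 12 * A / (lam * m)); [|unfold beta; lra].
    apply Rmult_le_pos; [lra|]. left; apply Rinv_0_lt_compat; nra. }
  set (nu := Rmin (lam / (12 * A + 1)) (1 / beta)).
  exists beta, nu. split; [auto|]. split.
  { unfold nu, Rmin; destruct Rle_dec; apply Rdiv_lt_0_compat; lra. }
  intros xi et ze n1 n2 Hn1 Hn2 HN Hreg.
  apply (chetaev_rate_ineq lam b0 b1 K beta nu); auto.
  - fold A m. replace (lam * m * beta) with (12 * A + lam * m)
      by (unfold beta; field; split; lra).
    nra.
  - fold A. assert (nu <= lam / (12 * A + 1)) by apply Rmin_l.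
    apply Rle_trans with (3 * A * (lam / (12 * A + 1))); [apply Rmult_le_compat_l; lra|].
    apply Rmult_le_reg_r with (12 * A + 1); [lra|].
    replace (3 * A * (lam / (12 * A + 1)) * (12 * A + 1)) with (3 * A * lam) by (field; lra).
    nra.
  - assert (nu <= 1 / beta) by apply Rmin_r.
    apply Rle_trans with (beta * (1 / beta)); [apply Rmult_le_compat_l; lra|].
    right; field; lra.
Qed.

(** * The boost converter under PI control *)

Section BoostPI.

Variables d2 Y KP KI u0 : R.
Hypotheses (Hd2 : 0 < d2) (HY : 0 < Y) (HKP : 0 <= KP) (HKI : 0 < KI).

Local Notation F := (boost_PI d2 Y KP KI u0).

Definition X1 : R := d2 * Y ^ 2.
Definition Xc : R := (/ Y - u0) / KI.
Definition equilibrium : R * R * R := ((X1, Y), Xc).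

Lemma is_equilibrium_iff c : is_equilibrium F c <-> c = equilibrium.
Proof.
  destruct c as [[x1 x2] x3].
  unfold is_equilibrium, boost_PI, equilibrium, X1, Xc, st1, st2, st3; simpl. split.
  - intros Hc. injection Hc as H1 H2 H3.
    assert (Ex2 : x2 = Y) by lra. subst x2.
    assert (Eu : u0 + KI * x3 + KP * (Y - Y) = / Y)
      by (apply Rmult_eq_reg_l with Y; [rewrite Rinv_r|]; lra).
    rewrite Eu in H2.
    assert (Ex1 : x1 = d2 * Y ^ 2).
    { replace x1 with (x1 * / Y * Y) by (field; lra).
      replace (x1 * / Y) with (d2 * Y) by lra. ring. }
    assert (Ex3 : x3 = (/ Y - u0) / KI)
      by (apply Rmult_eq_reg_l with KI; [field_simplify_eq|]; lra).
    rewrite Ex1, Ex3. reflexivity.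
  - intros Hc. injection Hc as -> -> ->. f_equal; [f_equal|]; field; lra.
Qed.

(* The linearisation of [F] at the equilibrium has characteristic polynomial
   [s^3 + a2 s^2 + a1 s - KI], whose constant term is negative. *)
Definition a2 : R := d2 + X1 * KP.
Definition a1 : R := X1 * KI + (/ Y) ^ 2 - KP.

Variable lam : R.
Hypotheses (Hlam : 0 < lam) (Hchar : lam ^ 3 + a2 * lam ^ 2 + a1 * lam - KI = 0).

Definition b1 : R := a2 + lam.
Definition b0 : R := lam ^ 2 + a2 * lam + a1.

Lemma lam_b0 : lam * b0 = KI.
Proof. unfold b0. lra. Qed.

Lemma b0_pos : 0 < b0.
Proof.
  assert (H := lam_b0). destruct (Rle_dec b0 0) as [Hb|Hb]; [|lra].
  assert (lam * b0 <= 0) by (apply Rmult_le_0_l; lra). lra.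
Qed.

Lemma X1_pos : 0 < X1.
Proof. unfold X1. apply Rmult_lt_0_compat; [lra | apply pow_lt; lra]. Qed.

Lemma a2_nonneg : 0 <= a2.
Proof. unfold a2. assert (0 <= X1 * KP) by (apply Rmult_le_pos; [left; apply X1_pos | lra]). lra. Qed.

Lemma b1_nonneg : 0 <= b1.
Proof. unfold b1. assert (H := a2_nonneg). lra. Qed.

(* [xi] is the coordinate along the unstable eigendirection (a left eigenvector of
   the linearisation for [lam]); on the complementary invariant plane the linear
   flow reads [eta' = zeta], [zeta' = - b0 eta - b1 zeta]. *)
Definition xi_form : R * R * R -> R := lin3 (- / Y) (- lam) (b0 - X1 * KI).
Definition eta_form : R * R * R -> R := lin3 0 (-1) (- lam).
Definition zeta_form : R * R * R -> R := lin3 (- / Y) b1 (- (X1 * KI)).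

Definition xi c := xi_form c - xi_form equilibrium.
Definition eta c := eta_form c - eta_form equilibrium.
Definition zeta c := zeta_form c - zeta_form equilibrium.

(* the deviation [u - 1 / Y] of the duty cycle from its equilibrium value *)
Definition ctrl_dev c : R := KI * (st3 c - Xc) - KP * (st2 c - Y).
Definition n1 c : R := - (st1 c - X1) * ctrl_dev c.
Definition n2 c : R := / Y * (st2 c - Y) * ctrl_dev c + a2 * (st1 c - X1) * ctrl_dev c.

Ltac unfold_coords :=
  unfold xi, eta, zeta, xi_form, eta_form, zeta_form, lin3, n1, n2, ctrl_dev,
    boost_PI, equilibrium, b1, b0, a2, a1, X1, Xc, st1, st2, st3; simpl.

(* [xi_form_F] and [zeta_form_F] hold up to a multiple of [KI - lam b0], which vanishes
   because [lam] is a root of the characteristic polynomial. *)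
Lemma xi_form_F c : xi_form (F c) = lam * xi c + n2 c + b1 * n1 c.
Proof.
  assert (H := lam_b0). destruct c as [[x1 x2] x3].
  transitivity (lam * xi ((x1, x2), x3) + n2 ((x1, x2), x3) + b1 * n1 ((x1, x2), x3)
                + (KI - lam * b0) * (x3 - Xc)); [|rewrite H; ring].
  unfold_coords. field. lra.
Qed.

Lemma eta_form_F c : eta_form (F c) = zeta c + n1 c.
Proof. destruct c as [[x1 x2] x3]. unfold_coords. field. lra. Qed.

Lemma zeta_form_F c : zeta_form (F c) = - b0 * eta c - b1 * zeta c + n2 c - lam * n1 c.
Proof.
  assert (H := lam_b0). destruct c as [[x1 x2] x3].
  transitivity (- b0 * eta ((x1, x2), x3) - b1 * zeta ((x1, x2), x3) + n2 ((x1, x2), x3)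
                - lam * n1 ((x1, x2), x3) + (KI - lam * b0) * (x3 - Xc)); [|rewrite H; ring].
  unfold_coords. field. lra.
Qed.

Lemma dev_le_chetaev : exists C, 0 <= C /\ forall c,
  coord_close (C * (Rabs (xi c) + Rabs (eta c) + Rabs (zeta c))) c equilibrium.
Proof.
  assert (Hb0 := b0_pos). assert (Hb1 := b1_nonneg). assert (HX1 := X1_pos).
  set (D := lam * (b1 + lam) + b0).
  assert (HD : 0 < D) by (unfold D; nra).
  set (cr := (1 + b1 + lam) / D). set (cq := 1 + lam * cr).
  set (cp := Y * (b1 * cq + X1 * KI * cr + 1)).
  assert (Hcr : 0 <= cr) by (unfold cr; apply Rmult_le_pos; [lra | left; apply Rinv_0_lt_compat; lra]).
  assert (Hcq : 0 <= cq) by (unfold cq; nra).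
  assert (HXK : 0 <= X1 * KI) by nra.
  assert (Hcp : 0 <= cp) by (unfold cp; apply Rmult_le_pos; [lra|]; nra).
  exists (cr + cq + cp). split; [lra|]. intros c.
  assert (Er : D * (st3 c - Xc) = xi c - (b1 + lam) * eta c - zeta c)
    by (unfold D; destruct c as [[x1 x2] x3]; unfold_coords; field; lra).
  assert (Eq : st2 c - Y = - eta c - lam * (st3 c - Xc))
    by (destruct c as [[x1 x2] x3]; unfold_coords; field; lra).
  assert (Ep : st1 c - X1 = Y * (b1 * (st2 c - Y) - X1 * KI * (st3 c - Xc) - zeta c))
    by (destruct c as [[x1 x2] x3]; unfold_coords; field; lra).
  set (N := Rabs (xi c) + Rabs (eta c) + Rabs (zeta c)).
  assert (H1 := Rabs_pos (xi c)). assert (H2 := Rabs_pos (eta c)). assert (H3 := Rabs_pos (zeta c)).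
  assert (Hr : Rabs (st3 c - Xc) <= cr * N).
  { apply Rmult_le_reg_l with D; [lra|].
    replace (D * (cr * N)) with ((1 + b1 + lam) * N) by (unfold cr; field; lra).
    rewrite <- (Rabs_right D), <- Rabs_mult, Er by lra.
    eapply Rle_trans; [apply Rabs_sub_le; [apply Rabs_sub_le; [apply Rle_refl|]|]; apply Rle_refl|].
    rewrite Rabs_mult, (Rabs_right (b1 + lam)) by lra. unfold N in *. nra. }
  assert (Hq : Rabs (st2 c - Y) <= cq * N).
  { rewrite Eq. eapply Rle_trans; [apply Rabs_sub_le; apply Rle_refl|].
    rewrite Rabs_Ropp, Rabs_mult, (Rabs_right lam) by lra. unfold cq; unfold N in *. nra. }
  assert (Hp : Rabs (st1 c - X1) <= cp * N).
  { rewrite Ep, Rabs_mult, (Rabs_right Y) by lra. unfold cp. rewrite (Rmult_assoc Y).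
    apply Rmult_le_compat_l; [lra|].
    eapply Rle_trans; [apply Rabs_sub_le; [apply Rabs_sub_le|]; apply Rle_refl|].
    rewrite !Rabs_mult, (Rabs_right b1), (Rabs_right X1), (Rabs_right KI) by lra.
    unfold N in *. nra. }
  assert (HN : 0 <= N) by (unfold N; lra).
  intros pr [->|[-> | ->]]; simpl; [eapply Rle_trans; [apply Hp|] | eapply Rle_trans; [apply Hq|]
    | eapply Rle_trans; [apply Hr|]]; apply Rmult_le_compat_r; lra.
Qed.

Lemma nonlinear_le_sq : exists K, 0 <= K /\ forall c,
  Rabs (n1 c) <= K * (Rabs (xi c) + Rabs (eta c) + Rabs (zeta c)) ^ 2 /\
  Rabs (n2 c) <= K * (Rabs (xi c) + Rabs (eta c) + Rabs (zeta c)) ^ 2.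
Proof.
  destruct dev_le_chetaev as [C [HC Hdev]].
  assert (Ha2 := a2_nonneg). assert (HU : 0 < / Y) by (apply Rinv_0_lt_compat; lra).
  exists ((1 + / Y + a2) * (KI + KP) * C ^ 2). split.
  { apply Rmult_le_pos; [apply Rmult_le_pos|apply pow2_ge_0]; lra. }
  intros c. set (s := C * (Rabs (xi c) + Rabs (eta c) + Rabs (zeta c))).
  assert (Hp : Rabs (st1 c - X1) <= s) by (apply (Hdev c st1); unfold is_coord; auto).
  assert (Hq : Rabs (st2 c - Y) <= s) by (apply (Hdev c st2); unfold is_coord; auto).
  assert (Hr : Rabs (st3 c - Xc) <= s) by (apply (Hdev c st3); unfold is_coord; auto).
  assert (Hs : 0 <= s) by (eapply Rle_trans; [apply Rabs_pos | apply Hp]).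
  assert (Hv : Rabs (ctrl_dev c) <= (KI + KP) * s).
  { unfold ctrl_dev. rewrite Rmult_plus_distr_r. apply Rabs_sub_le; apply Rabs_mul_le; auto;
      rewrite Rabs_right; lra. }
  assert (HKs : 0 <= (KI + KP) * s) by (apply Rmult_le_pos; lra).
  replace ((1 + / Y + a2) * (KI + KP) * C ^ 2 * (Rabs (xi c) + Rabs (eta c) + Rabs (zeta c)) ^ 2)
    with ((1 + / Y + a2) * (s * ((KI + KP) * s))) by (unfold s; ring).
  assert (H1 : Rabs (n1 c) <= s * ((KI + KP) * s))
    by (unfold n1; rewrite <- Rabs_Ropp, Ropp_mult_distr_l, Ropp_involutive;
        apply Rabs_mul_le; auto).
  assert (Hss : 0 <= s * ((KI + KP) * s)) by (apply Rmult_le_pos; lra).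
  split; [nra|].
  unfold n2. apply Rle_trans with (/ Y * (s * ((KI + KP) * s)) + a2 * (s * ((KI + KP) * s))).
  - rewrite !Rmult_assoc. apply Rabs_add_le; rewrite Rabs_mult, Rabs_right by lra;
      apply Rmult_le_compat_l; try lra; apply Rabs_mul_le; auto.
  - nra.
Qed.

Definition chetaev_fn (beta : R) c : R := xi c - beta * (zeta c ^ 2 + b0 * eta c ^ 2).

Definition chetaev_rate (beta : R) c (w : R * R * R) : R :=
  xi_form w - beta * (2 * zeta c * zeta_form w + b0 * (2 * eta c * eta_form w)).

Lemma is_derive_chetaev_fn beta (y : R -> R * R * R) t w :
  (forall pr, is_coord pr -> is_derive (fun s => pr (y s)) t (pr w)) ->
  is_derive (fun s => chetaev_fn beta (y s)) t (chetaev_rate beta (y t) w).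
Proof.
  intros Hy.
  assert (Hlin : forall k1 k2 k3 e, is_derive (fun s => lin3 k1 k2 k3 (y s) - lin3 k1 k2 k3 e) t
                                      (lin3 k1 k2 k3 w)).
  { intros. rewrite <- (Rminus_0_r (lin3 k1 k2 k3 w)).
    apply (is_derive_minus (fun s => lin3 k1 k2 k3 (y s)) (fun _ => lin3 k1 k2 k3 e));
      [apply is_derive_lin3; auto | apply (@is_derive_const R_AbsRing R_NormedModule)]. }
  assert (Hsq : forall f df, is_derive f t df -> is_derive (fun s => f s ^ 2) t (2 * f t * df)).
  { intros f df Hf. eapply is_derive_ext; [intros s; reflexivity|].
    replace (2 * f t * df) with (INR 2 * df * f t ^ Nat.pred 2) by (simpl; ring).
    apply is_derive_pow, Hf. }
  unfold chetaev_fn, chetaev_rate.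
  apply (is_derive_minus (fun s => xi (y s)) (fun s => beta * (zeta (y s) ^ 2 + b0 * eta (y s) ^ 2))).
  - apply Hlin.
  - apply is_derive_scal.
    apply (is_derive_plus (fun s => zeta (y s) ^ 2) (fun s => b0 * eta (y s) ^ 2)).
    + apply Hsq, Hlin.
    + apply is_derive_scal, Hsq, Hlin.
Qed.

Lemma chetaev_box : exists a beta nu, 0 < a /\ 0 < beta /\ forall c,
  coord_close a c equilibrium ->
  chetaev_fn beta c <= nu /\
  (0 < chetaev_fn beta c -> lam * chetaev_fn beta c / 2 <= chetaev_rate beta c (F c)).
Proof.
  assert (Hb0 := b0_pos). assert (Hb1 := b1_nonneg).
  destruct nonlinear_le_sq as [K [HK HnK]].
  destruct (chetaev_constants lam b0 b1 K) as [beta [nu [Hbeta [Hnu Hineq]]]]; auto.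
  set (Cb := (Rabs (- / Y) + Rabs (- lam) + Rabs (b0 - X1 * KI)) + (Rabs 0 + Rabs (-1) + Rabs (- lam))
             + (Rabs (- / Y) + Rabs b1 + Rabs (- (X1 * KI)))).
  assert (HCb : 0 <= Cb) by (unfold Cb; repeat apply Rplus_le_le_0_compat; apply Rabs_pos).
  set (a := nu / (Cb + 1)).
  assert (Ha : 0 < a) by (unfold a; apply Rdiv_lt_0_compat; lra).
  assert (HaN : Cb * a <= nu).
  { unfold a. apply Rmult_le_reg_r with (Cb + 1); [lra|].
    replace (Cb * (nu / (Cb + 1)) * (Cb + 1)) with (Cb * nu) by (field; lra). nra. }
  exists a, beta, nu. split; [auto|]. split; [auto|]. intros c Hc.
  assert (HN : Rabs (xi c) + Rabs (eta c) + Rabs (zeta c) <= nu).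
  { eapply Rle_trans; [|apply HaN].
    replace (Cb * a) with ((Rabs (- / Y) + Rabs (- lam) + Rabs (b0 - X1 * KI)) * a
      + (Rabs 0 + Rabs (-1) + Rabs (- lam)) * a
      + (Rabs (- / Y) + Rabs b1 + Rabs (- (X1 * KI))) * a) by (unfold Cb; ring).
    repeat apply Rplus_le_compat; apply lin3_sub_le; auto. }
  assert (Hsq : 0 <= zeta c ^ 2 + b0 * eta c ^ 2)
    by (assert (H1 := pow2_ge_0 (zeta c)); assert (H2 := pow2_ge_0 (eta c)); nra).
  assert (HV : chetaev_fn beta c <= xi c) by (unfold chetaev_fn; nra).
  split.
  - assert (H1 := Rle_abs (xi c)). assert (H2 := Rabs_pos (eta c)).
    assert (H3 := Rabs_pos (zeta c)). lra.
  - intros HV0. destruct (HnK c) as [Hn1 Hn2].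
    assert (Hrate : chetaev_rate beta c (F c) = lam * xi c + n2 c + b1 * n1 c
      + 2 * beta * b1 * zeta c ^ 2 - 2 * beta * zeta c * (n2 c - lam * n1 c)
      - 2 * beta * b0 * eta c * n1 c)
      by (unfold chetaev_rate; rewrite xi_form_F, eta_form_F, zeta_form_F; ring).
    rewrite Hrate. eapply Rle_trans; [|apply Hineq; auto].
    + nra.
    + unfold chetaev_fn in HV0. lra.
Qed.

Definition unstable_dir : R * R * R :=
  ((- Y * (lam ^ 2 + a2 * lam + X1 * KI) / (lam * (b1 + lam) + b0),
    - lam / (lam * (b1 + lam) + b0)), 1 / (lam * (b1 + lam) + b0)).

Lemma chetaev_forms_unstable_dir :
  xi_form unstable_dir = 1 /\ eta_form unstable_dir = 0 /\ zeta_form unstable_dir = 0.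
Proof.
  assert (Hb0 := b0_pos). assert (Hb1 := b1_nonneg).
  assert (HD : 0 < lam * (b1 + lam) + b0) by nra. revert HD.
  unfold xi_form, eta_form, zeta_form, lin3, unstable_dir, b1, st1, st2, st3; simpl.
  intros HD. repeat split; field; lra.
Qed.

Lemma chetaev_fn_shift_unstable_dir beta sigma :
  chetaev_fn beta (shift equilibrium unstable_dir sigma) = sigma.
Proof.
  destruct chetaev_forms_unstable_dir as [Hxi [Heta Hzeta]].
  unfold chetaev_fn, xi, eta, zeta, xi_form, eta_form, zeta_form in *.
  rewrite !lin3_shift, Hxi, Heta, Hzeta. ring.
Qed.

Theorem equilibrium_unstable : ~ lyapunov_stable F equilibrium.
Proof.
  intros Hst.
  destruct chetaev_box as [a [beta [nu [Ha [Hbeta Hbox]]]]].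
  destruct (Hst a Ha) as [delta [Hdelta Hstab]].
  set (W := Rabs (st1 unstable_dir) + Rabs (st2 unstable_dir) + Rabs (st3 unstable_dir)).
  assert (HW : 0 <= W) by (unfold W; assert (H1 := Rabs_pos (st1 unstable_dir));
    assert (H2 := Rabs_pos (st2 unstable_dir)); assert (H3 := Rabs_pos (st3 unstable_dir)); lra).
  set (sigma := Rmin delta a / (2 * (W + 1))).
  assert (Hmin : 0 < Rmin delta a) by (apply Rmin_pos; lra).
  assert (Hsigma : 0 < sigma) by (unfold sigma; apply Rdiv_lt_0_compat; lra).
  set (x0 := shift equilibrium unstable_dir sigma).
  assert (Hx0 : dist3 x0 equilibrium < Rmin delta a).
  { eapply Rle_lt_trans; [apply dist3_shift; lra|]. fold W.
    apply Rle_lt_trans with (sigma * (W + 1)); [apply Rmult_le_compat_l; lra|].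
    unfold sigma. replace (Rmin delta a / (2 * (W + 1)) * (W + 1)) with (Rmin delta a / 2)
      by (field; lra). lra. }
  assert (Hmd := Rmin_l delta a). assert (Hma := Rmin_r delta a).
  destruct (bdd_lip_boost_PI_clamp d2 Y KP KI u0 a equilibrium) as [M [L [HM [HL HG]]]]; [lra|].
  destruct (ode_global_solution _ _ _ x0 HM HL HG) as [y [Hy0 Hy]].
  set (g := fun t => dist3 (y t) equilibrium - a).
  assert (Hclamp : forall t, g t <= 0 -> clamp a equilibrium (y t) = y t)
    by (intros t Ht; apply clamp_id, coord_close_of_dist3_le; unfold g in Ht; lra).
  destruct (escape_of_growth (fun t => chetaev_fn beta (y t))
    (fun t => chetaev_rate beta (y t) (F (clamp a equilibrium (y t)))) g lam nu)
    as [t1 [Ht1 [Hgt1 Hin]]]; auto.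
  - rewrite Hy0. unfold x0. rewrite chetaev_fn_shift_unstable_dir. exact Hsigma.
  - unfold g. rewrite Hy0. lra.
  - intros t. apply is_derive_chetaev_fn. intros pr Hpr. apply Hy, Hpr.
  - intros t. apply (continuous_minus (V := R_NormedModule)); [|apply continuous_const].
    apply continuous_dist3. intros pr Hpr.
    apply (ex_derive_continuous (fun s => pr (y s))). eexists. apply Hy, Hpr.
  - intros t _ Hgt. rewrite Hclamp by auto.
    apply Hbox, coord_close_of_dist3_le. unfold g in Hgt. lra.
  - assert (Hsol : is_solution F t1 y).
    { intros t Ht. rewrite <- (Hclamp t (Hin t Ht)).
      repeat split; apply Hy; unfold is_coord; auto. }
    assert (Hlt := Hstab t1 y ltac:(lra) Hsol ltac:(rewrite Hy0; lra) t1 ltac:(lra)).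
    unfold g in Hgt1. lra.
Qed.

End BoostPI.

Theorem proposition1 (d2 ystar KP KI u0 : R) :
  0 < d2 -> 0 < ystar -> 0 <= KP -> 0 < KI ->
  (exists! e : R * R * R, is_equilibrium (boost_PI d2 ystar KP KI u0) e) /\
  (forall e : R * R * R, is_equilibrium (boost_PI d2 ystar KP KI u0) e ->
     ~ lyapunov_stable (boost_PI d2 ystar KP KI u0) e).
Proof.
  intros Hd2 HY HKP HKI. split.
  - exists (equilibrium d2 ystar KI u0). split.
    + apply is_equilibrium_iff; auto.
    + intros e He. symmetry. apply (is_equilibrium_iff d2 ystar KP KI u0); auto.
  - intros e He. apply is_equilibrium_iff in He; auto. subst e.
    destruct (cubic_pos_root (a2 d2 ystar KP) (a1 d2 ystar KP KI) KI HKI) as [lam [Hlam Hchar]].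
    apply (equilibrium_unstable d2 ystar KP KI u0 Hd2 HY HKP HKI lam Hlam Hchar).
Qed.
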